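(* Let $S$ be an investment strategy with parameter space $\mathbb W=\mathcal W_k^\ell$ satisfying conditions $(\mathrm L_\varepsilon)$ and $(\mathrm D_c)$, let $c'=\frac{2c}{\varepsilon}$, let $\sigma>0$, $\Gamma\ge2$, and $0<\nu\le2$. Define $\delta'_t(\nu)=\frac{\nu}{3\Gamma c'mt^4k\ell}$. Then there is $t_0$ (depending only on $\nu,c',m$) such that for all $t\ge t_0$, every market sequence, and all $\mathbf w,\mathbf w'\in\mathbb W$ with $|w_{ij}-w'_{ij}|\le\delta'_t(\nu)$ for all $1\le i\le\ell$, $1\le j\le k$: $(1+\nu)^{-1}F_t(\mathbf w)\le F_t(\mathbf w')\le(1+\nu)F_t(\mathbf w)$.
   Context: Let $m\ge2$ and $\mathbf x_0,\mathbf x_1,\dots\in(0,\infty)^m$ be return vectors. $\mathcal W_k=\{\mathbf w\in[0,1]^k:\sum_i w_i=1\}$. An investment strategy $S$ with parameter space $\mathbb W=\mathcal W_k^\ell$ (elements $\mathbf w=(\mathbf w_1,\dots,\mathbf w_\ell)$, $\mathbf w_i=(w_{i1},\dots,w_{ik})$) assigns to each $t\ge0$, $\mathbf w$ a description $S_t(\mathbf w)\in\mathcal W_m$; $\mathcal R_t(\mathbf w)=\prod_{s=0}^{t-1}S_s(\mathbf w)\cdot\mathbf x_s$. Damped return: $f_{ij}(\mathbf w)=e^{\Gamma\min(w_{ij}-\sigma,0)}$ and $F_t(\mathbf w)=\mathcal R_t(\mathbf w)\prod_{i=1}^\ell\prod_{j=1}^k f_{ij}(\mathbf w)$. Condition $(\mathrm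 L_\varepsilon)$: $S_{ti}(\mathbf w)\ge\frac{\varepsilon}{2m(t+1)^2}$ for all $t,i,\mathbf w$ (with fixed $\varepsilon\in(0,1)$). Condition $(\mathrm D_c)$: for all $t\ge0$, $1\le i\le m$, $\mathbf w,\mathbf w'\in\mathbb W$, $|S_{ti}(\mathbf w)-S_{ti}(\mathbf w')|\le c(t+1)\sum_{\iota=1}^\ell\sum_{j=1}^{k-1}|w_{\iota j}-w'_{\iota j}|$. *)

(* concrete reals R. Indices are 0-based naturals. *)
From Stdlib Require Import Reals.
Open Scope R_scope.

Fixpoint sumR (n : nat) (f : nat -> R) : R :=
  match n with O => 0 | S n' => sumR n' f + f n' end.
Fixpoint prodR (n : nat) (f : nat -> R) : R :=
  match n with O => 1 | S n' => prodR n' f * f n' end.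

Definition in_simplex (k : nat) (v : nat -> R) : Prop :=
  (forall j, (j < k)%nat -> 0 <= v j <= 1) /\ sumR k v = 1.

(* parameter w = (w_1,...,w_l), w i j = w_{(i+1)(j+1)}; w in W = W_k^l *)
Definition in_param (k l : nat) (w : nat -> nat -> R) : Prop :=
  forall i, (i < l)%nat -> in_simplex k (w i).

(* A strategy: S t w i is the i-th coordinate of S_t(w). *)
Definition strategy := nat -> (nat -> nat -> R) -> nat -> R.

Definition is_strategy (m k l : nat) (S : strategy) : Prop :=
  forall t w, in_param k l w -> in_simplex m (S t w).

Definition is_market (m : nat) (x : nat -> nat -> R) : Prop :=
  forall s i, (i < m)%nat -> 0 < x s i.

Definition wealth (m : nat) (S : strategy) (x : nat -> nat -> R) (t : nat)
  (w : nat -> nat -> R) : R :=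
  prodR t (fun s => sumR m (fun i => S s w i * x s i)).

Definition damp (Gamma sigma : R) (w : nat -> nat -> R) (i j : nat) : R :=
  exp (Gamma * Rmin (w i j - sigma) 0).

Definition damped_return (m k l : nat) (Gamma sigma : R) (S : strategy)
  (x : nat -> nat -> R) (t : nat) (w : nat -> nat -> R) : R :=
  wealth m S x t w * prodR l (fun i => prodR k (fun j => damp Gamma sigma w i j)).

Definition cond_L (m k l : nat) (eps : R) (S : strategy) : Prop :=
  forall t i w, (i < m)%nat -> in_param k l w ->
    eps / (2 * INR m * (INR t + 1) ^ 2) <= S t w i.

(* condition (D_c); the inner sum ranges over j = 1..k-1 (0-based: j < k-1) *)
Definition cond_D (m k l : nat) (c : R) (S : strategy) : Prop :=
  forall t i w w', (i < m)%nat -> in_param k l w -> in_param k l w' ->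
    Rabs (S t w i - S t w' i) <=
      c * (INR t + 1) * sumR l (fun io => sumR (k - 1) (fun j => Rabs (w io j - w' io j))).

Definition delta' (nu Gamma c' : R) (m k l t : nat) : R :=
  nu / (3 * Gamma * c' * INR m * INR t ^ 4 * INR k * INR l).

(* Moving the parameter by at most delta in every entry moves each coordinate of S_s
   by at most c (s+1) k l delta, which by (L_eps) is a relative change of at most
   c' m t^3 k l delta; over t periods the wealth changes by a factor at most
   exp (c' m t^4 k l delta).  Each damping factor is Gamma-Lipschitz in its exponent, so
   the damping product changes by a factor at most exp (Gamma k l delta).  For
   delta = delta'_t(nu) both exponents are at most nu/6 once c' t >= 1, and
   exp (nu/3) <= 1 + nu for nu <= 2. *)

From Stdlib Require Import Reals Lra Lia.
Open Scope R_scope.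

Lemma exp_le x y : x <= y -> exp x <= exp y.
Proof. intros [Hlt | ->]; [left; exact (exp_increasing _ _ Hlt) | lra]. Qed.

Lemma exp_pow x n : exp x ^ n = exp (INR n * x).
Proof.
  induction n as [|n IHn]; simpl pow.
  - rewrite Rmult_0_l, exp_0; reflexivity.
  - rewrite IHn, S_INR, <- exp_plus; f_equal; ring.
Qed.

Lemma exp_div3_le x : 0 <= x <= 2 -> exp (x / 3) <= 1 + x.
Proof.
  intros Hx.
  (* exp (-x/3) >= 1 - x/3 > 0, and 1/(1 - x/3) <= 1 + x amounts to x (2 - x) >= 0 *)
  assert (Hlow : 1 - x / 3 <= exp (- (x / 3))) by (pose proof (exp_ineq1_le (- (x / 3))); lra).
  rewrite <- (Rinv_inv (exp (x / 3))), <- exp_Ropp.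
  apply Rle_trans with (/ (1 - x / 3)).
  - apply Rinv_le_contravar; lra.
  - apply (Rmult_le_reg_l (1 - x / 3)); [lra|]. rewrite Rinv_r by lra. nra.
Qed.

Lemma Rmin0_sub_le a b : Rmin a 0 - Rmin b 0 <= Rabs (a - b).
Proof.
  pose proof (Rle_abs (a - b)); pose proof (Rabs_pos (a - b)).
  unfold Rmin; destruct (Rle_dec a 0), (Rle_dec b 0); lra.
Qed.

Lemma sumR_le n f g : (forall j, (j < n)%nat -> f j <= g j) -> sumR n f <= sumR n g.
Proof.
  induction n as [|n IHn]; simpl; intros Hfg; [lra|].
  pose proof (Hfg n ltac:(lia)).
  enough (sumR n f <= sumR n g) by lra.
  apply IHn; intros; apply Hfg; lia.
Qed.

Lemma sumR_ge0 n f : (forall j, (j < n)%nat -> 0 <= f j) -> 0 <= sumR n f.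
Proof.
  intros Hf; replace 0 with (sumR n (fun _ => 0)).
  - apply sumR_le; exact Hf.
  - clear Hf; induction n as [|n IHn]; simpl; [|rewrite IHn]; ring.
Qed.

Lemma sumR_le_const n f a : (forall j, (j < n)%nat -> f j <= a) -> sumR n f <= INR n * a.
Proof.
  induction n as [|n IHn]; simpl sumR; intros Hf; [simpl; lra|].
  rewrite S_INR; pose proof (Hf n ltac:(lia)).
  enough (sumR n f <= INR n * a) by lra.
  apply IHn; intros; apply Hf; lia.
Qed.

Lemma sumR_scale n a f : sumR n (fun j => a * f j) = a * sumR n f.
Proof. induction n as [|n IHn]; simpl; [|rewrite IHn]; ring. Qed.

Lemma prodR_ge0 n f : (forall j, (j < n)%nat -> 0 <= f j) -> 0 <= prodR n f.
Proof.
  induction n as [|n IHn]; simpl; intros Hf; [lra|].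
  apply Rmult_le_pos; [apply IHn; intros |]; apply Hf; lia.
Qed.

Lemma prodR_le n f g : (forall j, (j < n)%nat -> 0 <= f j <= g j) -> prodR n f <= prodR n g.
Proof.
  induction n as [|n IHn]; simpl; intros Hfg; [lra|].
  pose proof (Hfg n ltac:(lia)).
  apply Rmult_le_compat; try lra.
  - apply prodR_ge0; intros; apply Hfg; lia.
  - apply IHn; intros; apply Hfg; lia.
Qed.

Lemma prodR_scale n a f : prodR n (fun j => a * f j) = a ^ n * prodR n f.
Proof. induction n as [|n IHn]; simpl; [|rewrite IHn]; ring. Qed.

Lemma prodR_le_scale n a f g :
  (forall j, (j < n)%nat -> 0 <= g j <= a * f j) -> prodR n g <= a ^ n * prodR n f.
Proof. intros Hfg; rewrite <- prodR_scale; apply prodR_le; exact Hfg. Qed.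

Lemma damp_pos Gamma sigma w i j : 0 < damp Gamma sigma w i j.
Proof. apply exp_pos. Qed.

Lemma damp_le Gamma sigma w w' i j : 0 <= Gamma ->
  damp Gamma sigma w' i j <= exp (Gamma * Rabs (w i j - w' i j)) * damp Gamma sigma w i j.
Proof.
  intros HG; unfold damp; rewrite <- exp_plus; apply exp_le.
  pose proof (Rmin0_sub_le (w' i j - sigma) (w i j - sigma)) as Hmin.
  replace (w' i j - sigma - (w i j - sigma)) with (w' i j - w i j) in Hmin by ring.
  rewrite Rabs_minus_sym in Hmin.
  enough (Gamma * (Rmin (w' i j - sigma) 0 - Rmin (w i j - sigma) 0)
          <= Gamma * Rabs (w i j - w' i j)) by lra.
  apply Rmult_le_compat_l; assumption.
Qed.

Section Perturbation.

Variables (m k l : nat) (eps c : R) (S : strategy) (x : nat -> nat -> R).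
Hypotheses (HS : is_strategy m k l S) (HL : cond_L m k l eps S) (HD : cond_D m k l c S)
  (Heps : 0 < eps) (Hc : 0 <= c) (Hx : is_market m x).

Variables (w w' : nat -> nat -> R) (delta : R).
Hypotheses (Hw : in_param k l w) (Hw' : in_param k l w') (Hdelta : 0 <= delta)
  (Hclose : forall i j, (i < l)%nat -> (j < k)%nat -> Rabs (w i j - w' i j) <= delta).

Let c' := 2 * c / eps.
Let d := INR k * INR l * delta.

Fact c'_ge0 : 0 <= c'.
Proof. apply Rmult_le_pos; [lra | left; apply Rinv_0_lt_compat; exact Heps]. Qed.

Fact d_ge0 : 0 <= d.
Proof.
  pose proof (pos_INR k); pose proof (pos_INR l).
  unfold d; repeat apply Rmult_le_pos; assumption.
Qed.

Lemma param_dist_le :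
  sumR l (fun io => sumR (k - 1) (fun j => Rabs (w io j - w' io j))) <= d.
Proof.
  unfold d; rewrite (Rmult_comm (INR k)), Rmult_assoc.
  apply sumR_le_const; intros io Hio.
  apply Rle_trans with (INR (k - 1) * delta).
  - apply sumR_le_const; intros j Hj; apply Hclose; lia.
  - apply Rmult_le_compat_r; [exact Hdelta | apply le_INR; lia].
Qed.

Lemma strategy_ge0 s v i : in_param k l v -> (i < m)%nat -> 0 <= S s v i.
Proof. intros Hv Hi; apply (proj1 (HS s v Hv) i Hi). Qed.

Lemma period_return_ge0 s v : in_param k l v -> 0 <= sumR m (fun i => S s v i * x s i).
Proof.
  intros Hv; apply sumR_ge0; intros i Hi.
  apply Rmult_le_pos; [apply strategy_ge0 | left; apply Hx]; assumption.
Qed.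

Lemma wealth_ge0 t v : in_param k l v -> 0 <= wealth m S x t v.
Proof. intros Hv; apply prodR_ge0; intros; apply period_return_ge0; exact Hv. Qed.

Lemma damped_return_ge0 Gamma sigma t v :
  in_param k l v -> 0 <= damped_return m k l Gamma sigma S x t v.
Proof.
  intros Hv; apply Rmult_le_pos; [apply wealth_ge0; exact Hv|].
  apply prodR_ge0; intros; apply prodR_ge0; intros; left; apply damp_pos.
Qed.

Lemma strategy_perturb_le s i T : (i < m)%nat -> INR s + 1 <= T ->
  S s w' i <= (1 + c' * INR m * T ^ 3 * d) * S s w i.
Proof.
  intros Hi HsT.
  set (u := INR s + 1) in *.
  assert (Hu : 1 <= u) by (unfold u; pose proof (pos_INR s); lra).
  assert (Hm : 0 < INR m) by (apply lt_0_INR; lia).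
  pose proof d_ge0 as Hd; pose proof c'_ge0 as Hc'.
  assert (Hstep : S s w' i - S s w i <= c * u * d).
  { apply Rle_trans with (Rabs (S s w i - S s w' i)).
    - rewrite Rabs_minus_sym; apply Rle_abs.
    - eapply Rle_trans; [apply HD; assumption|].
      apply Rmult_le_compat_l; [apply Rmult_le_pos; lra | apply param_dist_le]. }
  (* by (L_eps), c u d = c' m u^3 d * eps/(2 m u^2) <= c' m T^3 d * S s w i *)
  assert (Hrel : c * u * d <= c' * INR m * T ^ 3 * d * S s w i).
  { apply Rle_trans with (c' * INR m * T ^ 3 * d * (eps / (2 * INR m * u ^ 2))).
    - replace (c' * INR m * T ^ 3 * d * (eps / (2 * INR m * u ^ 2)))
        with (c * d * (T ^ 3 / u ^ 2))
        by (unfold c'; field; repeat split; try lra; apply pow_nonzero; lra).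
      replace (c * u * d) with (c * d * (u ^ 3 / u ^ 2)) by (field; lra).
      apply Rmult_le_compat_l; [apply Rmult_le_pos; lra|].
      apply Rmult_le_compat_r; [left; apply Rinv_0_lt_compat, pow_lt; lra|].
      apply pow_incr; lra.
    - apply Rmult_le_compat_l; [|apply HL; assumption].
      assert (0 <= T ^ 3) by (apply pow_le; lra).
      repeat (assumption || apply Rmult_le_pos); lra. }
  lra.
Qed.

Lemma wealth_perturb_le t :
  wealth m S x t w' <= exp (c' * INR m * INR t ^ 4 * d) * wealth m S x t w.
Proof.
  set (A := c' * INR m * INR t ^ 3 * d).
  assert (HA : 0 <= A).
  { pose proof c'_ge0; pose proof d_ge0; pose proof (pos_INR m).
    assert (0 <= INR t ^ 3) by (apply pow_le, pos_INR).
    unfold A; repeat (assumption || apply Rmult_le_pos). }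
  assert (Hperiod : forall s, (s < t)%nat ->
    sumR m (fun i => S s w' i * x s i) <= (1 + A) * sumR m (fun i => S s w i * x s i)).
  { intros s Hs; rewrite <- sumR_scale; apply sumR_le; intros i Hi.
    rewrite <- Rmult_assoc; apply Rmult_le_compat_r; [left; apply Hx; exact Hi|].
    apply strategy_perturb_le; [exact Hi|].
    rewrite <- S_INR; apply le_INR; lia. }
  apply Rle_trans with ((1 + A) ^ t * wealth m S x t w).
  - apply prodR_le_scale; intros s Hs; split;
      [apply period_return_ge0; exact Hw' | apply Hperiod; exact Hs].
  - apply Rmult_le_compat_r; [apply wealth_ge0; exact Hw|].
    replace (c' * INR m * INR t ^ 4 * d) with (INR t * A) by (unfold A; ring).
    rewrite <- exp_pow; apply pow_incr.
    pose proof (exp_ineq1_le A); lra.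
Qed.

Lemma damping_perturb_le Gamma sigma : 0 <= Gamma ->
  prodR l (fun i => prodR k (fun j => damp Gamma sigma w' i j))
  <= exp (Gamma * d) * prodR l (fun i => prodR k (fun j => damp Gamma sigma w i j)).
Proof.
  intros HG.
  replace (exp (Gamma * d)) with ((exp (Gamma * delta) ^ k) ^ l)
    by (rewrite !exp_pow; f_equal; unfold d; ring).
  apply prodR_le_scale; intros i Hi; split.
  { apply prodR_ge0; intros; left; apply damp_pos. }
  apply prodR_le_scale; intros j Hj; split; [left; apply damp_pos|].
  eapply Rle_trans; [apply damp_le; exact HG|].
  apply Rmult_le_compat_r; [left; apply damp_pos|].
  apply exp_le, Rmult_le_compat_l; [exact HG | apply Hclose; assumption].
Qed.

Lemma damped_return_perturb_le Gamma sigma t : 0 <= Gamma ->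
  damped_return m k l Gamma sigma S x t w'
  <= exp ((c' * INR m * INR t ^ 4 + Gamma) * d)
     * damped_return m k l Gamma sigma S x t w.
Proof.
  intros HG; unfold damped_return.
  rewrite Rmult_plus_distr_r, exp_plus.
  replace (exp (c' * INR m * INR t ^ 4 * d) * exp (Gamma * d) *
           (wealth m S x t w * prodR l (fun i => prodR k (fun j => damp Gamma sigma w i j))))
    with ((exp (c' * INR m * INR t ^ 4 * d) * wealth m S x t w) *
          (exp (Gamma * d) * prodR l (fun i => prodR k (fun j => damp Gamma sigma w i j))))
    by ring.
  apply Rmult_le_compat.
  - apply wealth_ge0; exact Hw'.
  - apply prodR_ge0; intros; apply prodR_ge0; intros; left; apply damp_pos.
  - apply wealth_perturb_le.
  - apply damping_perturb_le; exact HG.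
Qed.

End Perturbation.

Lemma delta'_ge0 nu Gamma c' m k l t :
  0 <= nu -> 0 <= Gamma -> 0 <= c' -> 0 <= delta' nu Gamma c' m k l t.
Proof.
  intros Hnu HG Hc'; unfold delta', Rdiv.
  set (den := 3 * Gamma * c' * INR m * INR t ^ 4 * INR k * INR l).
  assert (Hden : 0 <= den).
  { pose proof (pos_INR m); pose proof (pos_INR k); pose proof (pos_INR l).
    assert (0 <= INR t ^ 4) by (apply pow_le, pos_INR).
    unfold den; repeat (assumption || apply Rmult_le_pos); lra. }
  apply Rmult_le_pos; [exact Hnu|].
  destruct Hden as [Hpos | <-]; [left; apply Rinv_0_lt_compat; exact Hpos | rewrite Rinv_0; lra].
Qed.

Lemma delta'_exponent_le nu Gamma c' m k l t :
  0 < nu -> 2 <= Gamma -> (2 <= m)%nat -> 1 <= c' * INR t ->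
  (c' * INR m * INR t ^ 4 + Gamma) * (INR k * INR l * delta' nu Gamma c' m k l t) <= nu / 3.
Proof.
  intros Hnu HG Hm Hct.
  assert (HM : 2 <= INR m) by (apply (le_INR 2); exact Hm).
  assert (HT : 1 <= INR t ^ 3).
  { apply pow_R1_Rle; destruct t; [simpl in Hct; lra | rewrite S_INR; pose proof (pos_INR t); lra]. }
  set (P := c' * INR m * INR t ^ 4).
  assert (HP : 2 <= P).
  { unfold P; replace (c' * INR m * INR t ^ 4) with ((c' * INR t) * INR m * INR t ^ 3) by ring.
    replace 2 with (1 * 2 * 1) by ring.
    apply Rmult_le_compat; try lra; apply Rmult_le_compat; lra. }
  destruct (Req_dec (INR k * INR l) 0) as [Hkl | Hkl].
  { rewrite <- Rmult_assoc, Hkl; lra. }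
  (* with D = nu / (3 Gamma P):  (P + Gamma) D = nu / (3 Gamma) + nu / (3 P) <= nu/6 + nu/6 *)
  replace ((P + Gamma) * (INR k * INR l * delta' nu Gamma c' m k l t))
    with (nu / (3 * Gamma) + nu / (3 * P)).
  2:{ assert (INR k <> 0) by (intros E; apply Hkl; rewrite E; ring).
      assert (INR l <> 0) by (intros E; apply Hkl; rewrite E; ring).
      assert (INR t <> 0) by (intros E; rewrite E in Hct; lra).
      assert (c' <> 0) by (intros E; rewrite E in Hct; lra).
      unfold delta', P; field; repeat split; lra. }
  assert (nu / (3 * Gamma) <= nu / 6 /\ nu / (3 * P) <= nu / 6) as [H1 H2].
  { split; apply Rmult_le_compat_l; try lra; apply Rinv_le_contravar; lra. }
  lra.
Qed.

Theorem mainTheorem13 :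
  forall (m : nat) (nu c' : R),
    (2 <= m)%nat -> 0 < nu <= 2 -> 0 < c' ->
    exists t0 : nat,
      forall (eps c : R), 0 < eps < 1 -> 0 < c -> c' = 2 * c / eps ->
      forall (k l : nat) (sigma Gamma : R) (S : strategy),
        0 < sigma -> 2 <= Gamma ->
        is_strategy m k l S -> cond_L m k l eps S -> cond_D m k l c S ->
        forall (t : nat), (t0 <= t)%nat ->
        forall (x : nat -> nat -> R), is_market m x ->
        forall (w w' : nat -> nat -> R),
          in_param k l w -> in_param k l w' ->
          (forall i j, (i < l)%nat -> (j < k)%nat ->
             Rabs (w i j - w' i j) <= delta' nu Gamma c' m k l t) ->
          / (1 + nu) * damped_return m k l Gamma sigma S x t w
            <= damped_return m k l Gamma sigma S x t w'
          /\ damped_return m k l Gamma sigma S x t w'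
            <= (1 + nu) * damped_return m k l Gamma sigma S x t w.
Proof.
  intros m nu c' Hm Hnu Hc'.
  destruct (INR_unbounded (/ c')) as [N HN].
  exists N.
  intros eps c Heps Hc Hc'e k l sigma Gamma S _ HG HS HL HD t Ht x Hx w w' Hw Hw' Hclose.
  assert (Hct : 1 <= c' * INR t).
  { apply Rle_trans with (c' * / c'); [rewrite Rinv_r; lra|].
    apply Rmult_le_compat_l; [lra|].
    apply Rle_trans with (INR N); [lra | apply le_INR; exact Ht]. }
  set (F := damped_return m k l Gamma sigma S x t).
  assert (Hratio : forall v v', in_param k l v -> in_param k l v' ->
            (forall i j, (i < l)%nat -> (j < k)%nat ->
               Rabs (v i j - v' i j) <= delta' nu Gamma c' m k l t) ->
            F v' <= (1 + nu) * F v).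
  { intros v v' Hv Hv' Hvv'.
    eapply Rle_trans.
    { assert (Hdelta : 0 <= delta' nu Gamma c' m k l t) by (apply delta'_ge0; lra).
      exact (damped_return_perturb_le m k l eps c S x HS HL HD ltac:(lra) ltac:(lra) Hx
               v v' _ Hv Hv' Hdelta Hvv' Gamma sigma t ltac:(lra)). }
    rewrite <- Hc'e.
    apply Rmult_le_compat_r; [apply (damped_return_ge0 m k l S x); assumption|].
    apply Rle_trans with (exp (nu / 3)); [|apply exp_div3_le; lra].
    apply exp_le, delta'_exponent_le; assumption || lra. }
  split.
  - apply (Rmult_le_reg_l (1 + nu)); [lra|].
    rewrite <- Rmult_assoc, Rinv_r, Rmult_1_l by lra.
    apply Hratio; try assumption.
    intros i j Hi Hj; rewrite Rabs_minus_sym; apply Hclose; assumption.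
  - apply Hratio; assumption.
Qed.
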